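(* Let $\pi$ be a set of primes, $G$ a finite group with the property $C_\pi$, $A$ a normal subgroup of $G$, $H$ a $\pi$-Hall subgroup of $G$, and assume $HA\trianglelefteq G$. Then $k_\pi^G(A)=k_\pi^{HA}(A)$.
   Context: All groups are finite. A subgroup $H$ of $G$ is a $\pi$-Hall subgroup if all prime divisors of $|H|$ lie in $\pi$ and no prime divisor of $|G:H|$ lies in $\pi$. $G$ has the property $E_\pi$ if it contains a $\pi$-Hall subgroup; $G$ has the property $C_\pi$ if it has $E_\pi$ and any two $\pi$-Hall subgroups of $G$ are conjugate in $G$. For a subnormal subgroup $A$ of a group $G$ with property $E_\pi$, a $G$-induced $\pi$-Hall subgroup of $A$ is a subgroup $K\cap A$ with $K$ a $\pi$-Hall subgroup of $G$; an $A$-class of $G$-induced $\pi$-Hall subgroups is a set $\{(K\cap A)^x\mid x\in A\}$ with $K$ a $\pi$-Hall subgroup of $G$; and $k_\pi^G(A)$ denotes the number of distinct $A$-classes of $G$-induced $\pi$-Hall subgroups of $A$. *)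

From mathcomp Require Import all_boot all_fingroup all_solvable.
Set Implicit Arguments. Unset Strict Implicit. Unset Printing Implicit Defensive.
Local Open Scope group_scope.

Definition E_pi (pi : nat_pred) (gT : finGroupType) (G : {set gT}) : Prop :=
  exists H : {group gT}, pi.-Hall(G) H.

Definition C_pi (pi : nat_pred) (gT : finGroupType) (G : {set gT}) : Prop :=
  E_pi pi G /\
  forall H K : {group gT}, pi.-Hall(G) H -> pi.-Hall(G) K ->
    exists2 x, x \in G & K :=: H :^ x.

Definition hall_subgroups (pi : nat_pred) (gT : finGroupType) (G : {set gT})
  : {set {group gT}} := [set K : {group gT} | pi.-Hall(G) K].

(* The A-class of G-induced pi-Hall subgroups determined by K:
   { (K :&: A) :^ x | x in A }. *)
Definition induced_class (gT : finGroupType) (K A : {set gT}) : {set {set gT}} :=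
  (K :&: A) :^: A.

Definition k_pi (pi : nat_pred) (gT : finGroupType) (G A : {set gT}) : nat :=
  #|[set induced_class (gval K) A | K in hall_subgroups pi G]|.

From mathcomp Require Import all_boot all_fingroup all_solvable.
Set Implicit Arguments. Unset Strict Implicit. Unset Printing Implicit Defensive.
Local Open Scope group_scope.

(* The number k_pi^G(A) depends on G only through the set of pi-Hall
   subgroups of G.  So it suffices to show that G and M := HA have exactly
   the same pi-Hall subgroups:
   - if a subgroup M of G contains a pi-Hall subgroup of G, then every
     pi-Hall subgroup of M is a pi-Hall subgroup of G (orders agree), and
     conversely every pi-Hall subgroup of G lying in M is pi-Hall in M;
   - if moreover G has C_pi and M is normal, M contains every pi-Hall
     subgroup of G, being a conjugate of the one it contains.
   With M = HA (normal by hypothesis, and a group since A is normalised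
   by H) both inclusions hold, hence the two counts coincide. *)

Section HallSubgroupsOfSubgroup.

Variables (pi : nat_pred) (gT : finGroupType) (G M H : {group gT}).
Hypotheses (sMG : M \subset G) (sHM : H \subset M) (hallH : pi.-Hall(G) H).

(* A pi-Hall subgroup of an intermediate group M containing a pi-Hall
   subgroup H of G is pi-Hall in G: its order is |M|_pi = |H| = |G|_pi. *)
Lemma pHall_sup_of_sub_Hall {K : {group gT}} :
  pi.-Hall(M) K -> pi.-Hall(G) K.
Proof.
move=> hallK; rewrite pHallE (subset_trans (pHall_sub hallK) sMG) /=.
have hallHM : pi.-Hall(M) H by exact: pHall_subl hallH.
by rewrite (card_Hall hallK) -(card_Hall hallHM) (card_Hall hallH).
Qed.

(* Under C_pi, a normal subgroup containing one pi-Hall subgroup of G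
   contains all of them, since they are conjugate to H. *)
Lemma normal_sub_all_Hall {K : {group gT}} :
  C_pi pi G -> M <| G -> pi.-Hall(G) K -> K \subset M.
Proof.
move=> [_ conjHall] nMG hallK; have [x xG ->] := conjHall H K hallH hallK.
by rewrite -(normsP (normal_norm nMG) x xG) conjSg.
Qed.

Lemma hall_subgroups_normal_eq :
  C_pi pi G -> M <| G -> hall_subgroups pi G = hall_subgroups pi M.
Proof.
move=> CG nMG; apply/setP=> K; rewrite !inE; apply/idP/idP=> hallK.
  have sKM := normal_sub_all_Hall CG nMG hallK.
  exact: pHall_subl sKM sMG hallK.
exact: pHall_sup_of_sub_Hall.
Qed.

End HallSubgroupsOfSubgroup.

Theorem lemma7 (pi : nat_pred) (gT : finGroupType) (G A H : {group gT}) :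
  C_pi pi G -> A <| G -> pi.-Hall(G) H -> H * A <| G ->
  k_pi pi G A = k_pi pi (H * A) A.
Proof.
move=> CG nAG hallH nHAG.
have nAH : H \subset 'N(A).
  exact: subset_trans (pHall_sub hallH) (normal_norm nAG).
rewrite -(norm_joinEl nAH) in nHAG *.
have sHM : H \subset H <*> A by exact: joing_subl.
by rewrite /k_pi (hall_subgroups_normal_eq (normal_sub nHAG) sHM hallH CG nHAG).
Qed.
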